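(* If $f:[-1,1]\to\mathbb{R}$ is continuous, then the set of sequential cord derivatives of $f$ at $0$ is either the empty set, a single point, or a closed interval in $\overline{\mathbb{R}}$.
   Context: $\overline{\mathbb{R}}=\mathbb{R}\cup\{\pm\infty\}$. $L\in\overline{\mathbb{R}}$ is a sequential cord derivative of $f$ at $0$ if there are sequences $h_n>0$, $k_n>0$ in $[-1,1]$ with $h_n\to0$, $k_n\to0$, and $\frac{f(h_n)-f(-k_n)}{h_n+k_n}\to L$ as $n\to\infty$. A closed interval in $\overline{\mathbb{R}}$ is a set $[a,b]=\{t\in\overline{\mathbb{R}}:a\le t\le b\}$ with $a<b$ in $\overline{\mathbb{R}}$. *)

From Stdlib Require Import Reals.
From Coquelicot Require Import Coquelicot.
Open Scope R_scope.

Definition seq_cord_derivative (f : R -> R) (L : Rbar) : Prop :=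
  exists h k : nat -> R,
    (forall n, 0 < h n /\ h n <= 1) /\
    (forall n, 0 < k n /\ k n <= 1) /\
    is_lim_seq h 0 /\ is_lim_seq k 0 /\
    is_lim_seq (fun n => (f (h n) - f (- k n)) / (h n + k n)) L.

Definition continuous_on_m11 (f : R -> R) : Prop :=
  forall x, -1 <= x <= 1 ->
    filterlim f (within (fun y => -1 <= y <= 1) (locally x)) (locally (f x)).

Definition Rbar_closed_interval (a b : Rbar) : Rbar -> Prop :=
  fun t => Rbar_le a t /\ Rbar_le t b.

From Stdlib Require Import Reals Lra Lia Classical IndefiniteDescription.
From Coquelicot Require Import Coquelicot.
Open Scope R_scope.

(* The sequential cord derivatives are exactly the cluster values of the cord slope
   Q(h,k) = (f h - f (-k)) / (h + k) as (h,k) -> (0+,0+), so they form a closed subset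
   of the extended reals. This set is also order-convex: if Q(h1,k1) < l < Q(h2,k2) with
   all of h1, k1, h2, k2 small, the intermediate value theorem applied along the segment
   from (h1,k1) to (h2,k2) yields small (h,k) with Q(h,k) = l. A nonempty closed
   order-convex subset of the extended reals contains its infimum and its supremum, so
   it is a point or a closed interval. *)

Lemma Rbar_locally_opp (x : Rbar) (P : R -> Prop) :
  Rbar_locally (Rbar_opp x) P <-> Rbar_locally x (fun y => P (- y)).
Proof.
  split; [exact (filterlim_Rbar_opp x P)|].
  intros HP.
  pose proof (filterlim_Rbar_opp (Rbar_opp x) (fun y => P (- y))) as Hopp.
  rewrite Rbar_opp_involutive in Hopp.
  apply (filter_imp (fun y => P (- - y))); [|exact (Hopp HP)].
  intros y; now rewrite Ropp_involutive.
Qed.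

Lemma Rbar_locally_left_interval (b : Rbar) (P : R -> Prop) :
  b <> m_infty -> Rbar_locally b P ->
  exists c : Rbar, Rbar_lt c b /\ forall x : R, Rbar_lt c x -> Rbar_lt x b -> P x.
Proof.
  destruct b as [r| |]; intros Hb HP; [| |easy].
  - destruct HP as [eps Heps].
    exists (r - eps); split; [simpl; destruct eps; simpl; lra|].
    intros x Hx Hxr; apply Heps.
    change (Rabs (x - r) < eps); apply Rabs_lt_between'; simpl in *; lra.
  - destruct HP as [M HM]. exists M; split; [easy|]. intros x Hx _; exact (HM x Hx).
Qed.

Lemma Rbar_is_lub_ex_gt (S : Rbar -> Prop) (b c : Rbar) :
  Rbar_is_lub S b -> Rbar_lt c b -> exists L, S L /\ Rbar_lt c L.
Proof.
  intros [_ Hleast] Hcb. apply NNPP; intros Hnone.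
  apply (Rbar_lt_not_le _ _ Hcb), Hleast; intros L HL.
  apply Rbar_not_lt_le; intros HcL; apply Hnone; eauto.
Qed.

Lemma Rbar_is_lub_adherent (S : Rbar -> Prop) (L0 b : Rbar) (P : R -> Prop) :
  S L0 -> Rbar_is_lub S b -> Rbar_locally b P -> exists L, S L /\ Rbar_locally L P.
Proof.
  intros HL0 Hb HP.
  destruct (classic (S b)) as [Sb|Snb]; [now exists b|].
  assert (Hb_finite : b <> m_infty).
  { intros ->. apply Snb. pose proof (proj1 Hb L0 HL0). now destruct L0. }
  destruct (Rbar_locally_left_interval b P Hb_finite HP) as [c [Hcb Hc]].
  destruct (Rbar_is_lub_ex_gt S b c Hb Hcb) as [L [HL HcL]].
  assert (HLb : Rbar_lt L b).
  { destruct (Rbar_le_lt_or_eq_dec _ _ (proj1 Hb L HL)) as [| ->]; easy. }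
  exists L; split; [exact HL|].
  generalize (filter_and _ _ (open_Rbar_gt' _ _ HcL) (open_Rbar_lt' _ _ HLb)).
  apply filter_imp; intros x [Hx1 Hx2]; exact (Hc x Hx1 Hx2).
Qed.

Lemma Rbar_is_glb_adherent (S : Rbar -> Prop) (L0 a : Rbar) (P : R -> Prop) :
  S L0 -> Rbar_is_glb S a -> Rbar_locally a P -> exists L, S L /\ Rbar_locally L P.
Proof.
  intros HL0 Ha HP.
  destruct (Rbar_is_lub_adherent (fun x => S (Rbar_opp x)) (Rbar_opp L0) (Rbar_opp a)
              (fun y => P (- y))) as [L [HL HLP]].
  - cbv beta; now rewrite Rbar_opp_involutive.
  - now apply Rbar_lub_glb.
  - apply (proj1 (Rbar_locally_opp (Rbar_opp a) P)); now rewrite Rbar_opp_involutive.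
  - exists (Rbar_opp L); split; [exact HL|]. exact (proj2 (Rbar_locally_opp L P) HLP).
Qed.

(* Equivalent to "every neighbourhood of L meets S", in the form in which closedness of
   a set of cluster values is immediate. *)
Definition Rbar_closed (S : Rbar -> Prop) : Prop :=
  forall L, (forall P, Rbar_locally L P -> exists L', S L' /\ Rbar_locally L' P) -> S L.

Definition Rbar_order_convex (S : Rbar -> Prop) : Prop :=
  forall a b L, S a -> S b -> Rbar_lt a L -> Rbar_lt L b -> S L.

Lemma Rbar_closed_convex_cases (S : Rbar -> Prop) :
  Rbar_closed S -> Rbar_order_convex S ->
  (forall L, ~ S L) \/ (exists a, forall L, S L <-> L = a) \/
  (exists a b, Rbar_lt a b /\ forall L, S L <-> Rbar_closed_interval a b L).
Proof.
  intros Hclosed Hconvex.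
  destruct (classic (exists L0, S L0)) as [[L0 HL0]|Hempty].
  2: { left; intros L HL; exact (Hempty (ex_intro _ L HL)). }
  right.
  destruct (Rbar_ex_glb S) as [a Ha], (Rbar_ex_lub S) as [b Hb].
  assert (Sa : S a)
    by (apply Hclosed; intros P; exact (Rbar_is_glb_adherent S L0 a P HL0 Ha)).
  assert (Sb : S b)
    by (apply Hclosed; intros P; exact (Rbar_is_lub_adherent S L0 b P HL0 Hb)).
  assert (Hinterval : forall L, S L <-> Rbar_closed_interval a b L).
  { intros L; split; [intros HL; split; [apply Ha | apply Hb]; exact HL|].
    intros [HaL HLb].
    destruct (Rbar_le_lt_or_eq_dec _ _ HaL) as [HaL'| <-]; [|exact Sa].
    destruct (Rbar_le_lt_or_eq_dec _ _ HLb) as [HLb'| ->]; [|exact Sb].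
    exact (Hconvex a b L Sa Sb HaL' HLb'). }
  destruct (Rbar_le_lt_or_eq_dec a b (proj2 (proj1 (Hinterval a) Sa))) as [Hab| <-].
  - right; exists a, b; split; [exact Hab | exact Hinterval].
  - left; exists a; intros L; rewrite Hinterval; split.
    + intros [HaL HLa]; exact (Rbar_le_antisym _ _ HLa HaL).
    + intros ->; split; apply Rbar_le_refl.
Qed.

Definition cord_slope (f : R -> R) (h k : R) : R := (f h - f (- k)) / (h + k).

(* [d <= 1] keeps [h] and [-k] in the interior of [-1,1], where [f] is continuous. *)
Definition cord_cluster_value (f : R -> R) (L : Rbar) : Prop :=
  forall P, Rbar_locally L P -> forall d, 0 < d <= 1 ->
    exists h k, 0 < h < d /\ 0 < k < d /\ P (cord_slope f h k).

Lemma seq_cord_derivative_cluster_value (f : R -> R) (L : Rbar) :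
  seq_cord_derivative f L -> cord_cluster_value f L.
Proof.
  intros [h [k [Hh [Hk [Hh0 [Hk0 HL]]]]]] P HP d [Hd _].
  assert (Hh_small : eventually (fun n => h n < d)) by exact (Hh0 _ (open_Rbar_lt' 0 d Hd)).
  assert (Hk_small : eventually (fun n => k n < d)) by exact (Hk0 _ (open_Rbar_lt' 0 d Hd)).
  destruct (filter_ex _ (filter_and _ _ Hh_small (filter_and _ _ Hk_small (HL P HP))))
    as [n [Hhn [Hkn HPn]]].
  exists (h n), (k n).
  destruct (Hh n), (Hk n). repeat split; assumption.
Qed.

Definition Rbar_nbhd_basis (L : Rbar) (n : nat) (x : R) : Prop :=
  match L with
  | Finite l => Rabs (x - l) < / INR (S n)
  | p_infty => INR n < x
  | m_infty => x < - INR n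
  end.

Lemma inv_INR_succ_pos (n : nat) : 0 < / INR (S n).
Proof. apply Rinv_0_lt_compat, lt_0_INR; lia. Qed.

Lemma inv_INR_succ_le_1 (n : nat) : / INR (S n) <= 1.
Proof.
  rewrite <- Rinv_1. apply Rinv_le_contravar; [lra|].
  apply (le_INR 1); lia.
Qed.

Lemma is_lim_seq_inv_INR_succ : is_lim_seq (fun n => / INR (S n)) 0.
Proof.
  apply (is_lim_seq_inv _ p_infty); [|discriminate].
  apply (is_lim_seq_incr_1 INR), is_lim_seq_INR.
Qed.

Lemma is_lim_seq_bounded_by_inv_INR_succ (u : nat -> R) :
  (forall n, 0 < u n < / INR (S n)) -> is_lim_seq u 0.
Proof.
  intros Hu. apply is_lim_seq_le_le with (fun _ => 0) (fun n => / INR (S n)).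
  - intros n; specialize (Hu n); lra.
  - apply is_lim_seq_const.
  - apply is_lim_seq_inv_INR_succ.
Qed.

Lemma Rbar_locally_nbhd_basis (L : Rbar) (n : nat) :
  Rbar_locally L (Rbar_nbhd_basis L n).
Proof.
  destruct L as [l| |]; simpl.
  - exists (mkposreal _ (inv_INR_succ_pos n)); intros y Hy; exact Hy.
  - exists (INR n); auto.
  - exists (- INR n); auto.
Qed.

Lemma is_lim_seq_nbhd_basis (u : nat -> R) (L : Rbar) :
  (forall n, Rbar_nbhd_basis L n (u n)) -> is_lim_seq u L.
Proof.
  intros Hu; apply is_lim_seq_spec; destruct L as [l| |]; cbn [Rbar_nbhd_basis] in Hu.
  - intros eps.
    destruct (proj2 (is_lim_seq_spec _ _) is_lim_seq_inv_INR_succ eps) as [N HN].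
    exists N; intros n Hn. specialize (HN n Hn); specialize (Hu n).
    rewrite Rminus_0_r, Rabs_pos_eq in HN by (left; apply inv_INR_succ_pos). lra.
  - intros M. destruct (proj2 (is_lim_seq_spec _ _) is_lim_seq_INR M) as [N HN].
    exists N; intros n Hn. specialize (HN n Hn); specialize (Hu n). lra.
  - intros M. destruct (proj2 (is_lim_seq_spec _ _) is_lim_seq_INR (- M)) as [N HN].
    exists N; intros n Hn. specialize (HN n Hn); specialize (Hu n). lra.
Qed.

Lemma cord_cluster_value_seq (f : R -> R) (L : Rbar) :
  cord_cluster_value f L -> seq_cord_derivative f L.
Proof.
  intros HL.
  destruct (functional_choice (fun n (hk : R * R) =>
      (0 < fst hk < / INR (S n)) /\ (0 < snd hk < / INR (S n)) /\
      Rbar_nbhd_basis L n (cord_slope f (fst hk) (snd hk)))) as [hk Hhk].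
  { intros n.
    destruct (HL _ (Rbar_locally_nbhd_basis L n) (/ INR (S n))
                (conj (inv_INR_succ_pos n) (inv_INR_succ_le_1 n))) as [h [k Hhk]].
    now exists (h, k). }
  exists (fun n => fst (hk n)), (fun n => snd (hk n)).
  split; [|split; [|split; [|split]]].
  - intros n; destruct (Hhk n) as [? _]; pose proof (inv_INR_succ_le_1 n); lra.
  - intros n; destruct (Hhk n) as [_ [? _]]; pose proof (inv_INR_succ_le_1 n); lra.
  - apply is_lim_seq_bounded_by_inv_INR_succ; apply Hhk.
  - apply is_lim_seq_bounded_by_inv_INR_succ; apply Hhk.
  - apply is_lim_seq_nbhd_basis; apply Hhk.
Qed.

Lemma continuous_on_m11_interior (f : R -> R) (x : R) :
  continuous_on_m11 f -> -1 < x < 1 -> continuity_pt f x.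
Proof.
  intros Hf Hx. apply continuity_pt_filterlim; intros P HP.
  assert (Hdom : locally x (fun y => -1 <= y <= 1)).
  { apply (locally_interval _ x (-1) 1); simpl; [lra | lra | intros; lra]. }
  assert (Hwithin : locally x (fun y => -1 <= y <= 1 -> P (f y)))
    by exact (Hf x (conj (Rlt_le _ _ (proj1 Hx)) (Rlt_le _ _ (proj2 Hx))) P HP).
  change (locally x (fun y => P (f y))).
  generalize (filter_and _ _ Hdom Hwithin).
  apply filter_imp; intros y [Hy HPy]; exact (HPy Hy).
Qed.

Lemma segment_in_interval (a b x y t : R) :
  a < x < b -> a < y < b -> 0 <= t <= 1 -> a < x + t * (y - x) < b.
Proof.
  intros Hx Hy Ht. destruct (Rle_or_lt x y).
  - assert (0 <= t * (y - x) <= y - x) by (split; nra). lra.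
  - assert (y - x <= t * (y - x) <= 0) by (split; nra). lra.
Qed.

Lemma cord_slope_ivt (f : R -> R) (l d h1 k1 h2 k2 : R) :
  continuous_on_m11 f -> d <= 1 ->
  0 < h1 < d -> 0 < k1 < d -> 0 < h2 < d -> 0 < k2 < d ->
  cord_slope f h1 k1 < l -> l < cord_slope f h2 k2 ->
  exists h k, 0 < h < d /\ 0 < k < d /\ cord_slope f h k = l.
Proof.
  intros Hf Hd Hh1 Hk1 Hh2 Hk2 Hslope1 Hslope2.
  set (h t := h1 + t * (h2 - h1)); set (k t := k1 + t * (k2 - k1)).
  assert (Hhk : forall t, 0 <= t <= 1 -> 0 < h t < d /\ 0 < k t < d)
    by (intros t Ht; split; apply segment_in_interval; lra).
  set (g t := f (h t) - f (- k t) - l * (h t + k t)).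
  assert (Hslope : forall t, 0 <= t <= 1 -> (cord_slope f (h t) (k t) - l) * (h t + k t) = g t).
  { intros t Ht; destruct (Hhk t Ht); unfold cord_slope, g; field; lra. }
  assert (Hg : forall t, 0 <= t <= 1 -> continuity_pt g t).
  { intros t Ht; destruct (Hhk t Ht).
    apply continuity_pt_minus; [apply continuity_pt_minus|].
    - apply (continuity_pt_comp h f); [unfold h; reg|].
      apply continuous_on_m11_interior; [exact Hf | lra].
    - apply (continuity_pt_comp (fun t => - k t) f); [unfold k; reg|].
      apply continuous_on_m11_interior; [exact Hf | lra].
    - unfold h, k; reg. }
  assert (Hg0 : g 0 < 0).
  { rewrite <- Hslope by lra. unfold h, k. rewrite !Rmult_0_l, !Rplus_0_r.
    apply Rmult_neg_pos; lra. }
  assert (Hg1 : 0 < g 1).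
  { rewrite <- Hslope by lra. unfold h, k. rewrite !Rmult_1_l, !Rplus_minus.
    apply Rmult_lt_0_compat; lra. }
  destruct (Ranalysis5.IVT_interv g 0 1 Hg Rlt_0_1 Hg0 Hg1) as [t [Ht Hgt]].
  destruct (Hhk t Ht) as [Hht Hkt].
  exists (h t), (k t); split; [exact Hht|]; split; [exact Hkt|].
  specialize (Hslope t Ht); rewrite Hgt in Hslope.
  apply Rmult_integral in Hslope as [Hzero|Hzero]; lra.
Qed.

Lemma cord_cluster_value_closed (f : R -> R) : Rbar_closed (cord_cluster_value f).
Proof. intros L H P HP. destruct (H P HP) as [L' [HL' HP']]. exact (HL' P HP'). Qed.

Lemma cord_cluster_value_convex (f : R -> R) :
  continuous_on_m11 f -> Rbar_order_convex (cord_cluster_value f).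
Proof.
  intros Hf a b L Ha Hb HaL HLb.
  destruct L as [l| |]; [| now destruct b | now destruct a].
  intros P HP d Hd.
  destruct (Ha _ (open_Rbar_lt' _ _ HaL) d Hd) as [h1 [k1 [Hh1 [Hk1 Hslope1]]]].
  destruct (Hb _ (open_Rbar_gt' _ _ HLb) d Hd) as [h2 [k2 [Hh2 [Hk2 Hslope2]]]].
  destruct (cord_slope_ivt f l d h1 k1 h2 k2 Hf (proj2 Hd) Hh1 Hk1 Hh2 Hk2 Hslope1 Hslope2)
    as [h [k [Hh [Hk Hslope]]]].
  exists h, k; split; [exact Hh | split; [exact Hk|]].
  rewrite Hslope; exact (locally_singleton _ _ HP).
Qed.

Theorem theorem3p5 (f : R -> R) (Hf : continuous_on_m11 f) :
  (forall L : Rbar, ~ seq_cord_derivative f L) \/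
  (exists a : Rbar, forall L : Rbar, seq_cord_derivative f L <-> L = a) \/
  (exists a b : Rbar, Rbar_lt a b /\
     forall L : Rbar, seq_cord_derivative f L <-> Rbar_closed_interval a b L).
Proof.
  assert (Hcluster : forall L, seq_cord_derivative f L <-> cord_cluster_value f L)
    by (split; [apply seq_cord_derivative_cluster_value | apply cord_cluster_value_seq]).
  apply Rbar_closed_convex_cases.
  - intros L HL. apply Hcluster, cord_cluster_value_closed.
    intros P HP. destruct (HL P HP) as [L' [HL' HP']].
    exists L'; split; [apply Hcluster|]; assumption.
  - intros a b L Ha Hb HaL HLb. apply Hcluster.
    apply (cord_cluster_value_convex f Hf a b); [apply Hcluster | apply Hcluster | |]; assumption.
Qed.
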